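(* Let $\boldsymbol\mu>\mathbf 0$ and assume $N\geq 2$ and every matrix in $\mathcal Z(\boldsymbol\mu)$ is irreducible. Run the following iteration: choose $\mathbf p^{(0)}\in\mathbb R^N$ with $\mathbf p^{(0)}>\mathbf 0$; for $k=0,1,2,\dots$ set $y_i^{(k)}=\max_{k_i\in\mathcal K_i}\big(\mathbf e_i^T-\mathbf a_i^{k_i}(\boldsymbol\mu)\big)\mathbf p^{(k)}$ for $i=1,\dots,N$, $\beta^{(k)}=\min_{1\le i\le N}p_i^{(k)}/y_i^{(k)}$, and $\mathbf p^{(k+1)}=\mathbf y^{(k)}/\|\mathbf y^{(k)}\|$. Then the sequence $(\beta^{(k)})_k$ is monotonically nondecreasing and bounded above by $1/\max_{\mathbf Z\in\mathcal Z(\boldsymbol\mu)}\lambda(\mathbf Z)=1/\max_{\mathbf G\in\mathcal G(\boldsymbol\mu)}\lambda(\mathbf I-\mathbf G)$; hence it converges.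
   Context: Multicast system: $N$ transmitters; transmitter $T_i$ has $K_i\geq1$ receivers $R_i^{k}$, $k\in\mathcal K_i=\{1,\dots,K_i\}$. Channel gains $g_{r_i^{k},t_j}\geq 0$ (from $T_j$ to $R_i^k$) with $g_{r_i^{k},t_i}>0$. For $\boldsymbol\mu\in\mathbb R^N$, $\mathbf a_i^{k}(\boldsymbol\mu)\in\mathbb R^{1\times N}$ is the row vector with $i$-th entry $1$ and $j$-th entry $-\mu_i g_{r_i^{k},t_j}/g_{r_i^{k},t_i}$ for $j\neq i$. $\mathcal G(\boldsymbol\mu)$ is the set of $N\times N$ matrices whose $i$-th row is $\mathbf a_i^{k_i}(\boldsymbol\mu)$ for some choice $k_i\in\mathcal K_i$, and $\mathcal Z(\boldsymbol\mu)=\{\mathbf I-\mathbf G:\mathbf G\in\mathcal G(\boldsymbol\mu)\}$ (a set of nonnegative matrices). $\mathbf e_i$ is the $i$-th standard basis column vector, $\|\cdot\|$ the Euclidean norm, $\lambda(\cdot)$ the Perron–Frobenius eigenvalue (spectral radius). *)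

From Stdlib Require Import Reals ClassicalEpsilon.
Open Scope R_scope.

(* Indices: transmitters i, j in {0,...,N-1}; receivers of T_i are k in {0,...,K i - 1}.
   g i k j = gain g_{r_i^k, t_j} (from T_j to receiver R_i^k). *)

Fixpoint rsum (n : nat) (f : nat -> R) : R :=
  match n with O => 0 | S m => rsum m f + f m end.

(* max_{0 <= j <= n} f j  and  min_{0 <= j <= n} f j *)
Fixpoint fmax (n : nat) (f : nat -> R) : R :=
  match n with O => f O | S m => Rmax (fmax m f) (f (S m)) end.
Fixpoint fmin (n : nat) (f : nat -> R) : R :=
  match n with O => f O | S m => Rmin (fmin m f) (f (S m)) end.

Definition a_row (g : nat -> nat -> nat -> R) (mu : nat -> R) (i k j : nat) : R :=
  if Nat.eqb j i then 1 else - mu i * g i k j / g i k i.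

Definition admissible (N : nat) (K : nat -> nat) (c : nat -> nat) : Prop :=
  forall i, (i < N)%nat -> (c i < K i)%nat.

(* G in G(mu) determined by the choice c, and Z = I - G in Z(mu). *)
Definition Gmat (g : nat -> nat -> nat -> R) (mu : nat -> R) (c : nat -> nat)
  (i j : nat) : R := a_row g mu i (c i) j.
Definition Zmat (g : nat -> nat -> nat -> R) (mu : nat -> R) (c : nat -> nat)
  (i j : nat) : R := (if Nat.eqb i j then 1 else 0) - Gmat g mu c i j.

(* Irreducibility of an N x N nonnegative matrix: its directed graph
   (edge i -> j iff Z i j > 0) is strongly connected. *)
Inductive reach (N : nat) (Z : nat -> nat -> R) : nat -> nat -> Prop :=
  | reach_edge : forall i j, Z i j > 0 -> reach N Z i j
  | reach_step : forall i l j, (l < N)%nat -> Z i l > 0 -> reach N Z l j -> reach N Z i j.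
Definition irreducible (N : nat) (Z : nat -> nat -> R) : Prop :=
  forall i j, (i < N)%nat -> (j < N)%nat -> reach N Z i j.

(* a + i b is a (complex) eigenvalue of the real N x N matrix Z:
   there is a nonzero complex vector x + i y with Z (x + i y) = (a + i b)(x + i y). *)
Definition is_eigenvalue (N : nat) (Z : nat -> nat -> R) (a b : R) : Prop :=
  exists x y : nat -> R,
    (exists i, (i < N)%nat /\ (x i <> 0 \/ y i <> 0)) /\
    forall i, (i < N)%nat ->
      rsum N (fun j => Z i j * x j) = a * x i - b * y i /\
      rsum N (fun j => Z i j * y j) = b * x i + a * y i.

(* Spectral radius: least upper bound of moduli of eigenvalues (= their max). *)
Definition spectral_radius (N : nat) (Z : nat -> nat -> R) : R :=
  epsilon (inhabits 0)
    (fun r => is_lub (fun t => exists a b, is_eigenvalue N Z a b /\ t = sqrt (a * a + b * b)) r).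

Definition max_lambda (N : nat) (K : nat -> nat) (g : nat -> nat -> nat -> R)
  (mu : nat -> R) : R :=
  epsilon (inhabits 0)
    (fun r => is_lub (fun t => exists c, admissible N K c /\ t = spectral_radius N (Zmat g mu c)) r).

Definition y_vec (N : nat) (K : nat -> nat) (g : nat -> nat -> nat -> R) (mu : nat -> R)
  (p : nat -> R) (i : nat) : R :=
  fmax (K i - 1) (fun ki =>
    rsum N (fun j => ((if Nat.eqb i j then 1 else 0) - a_row g mu i ki j) * p j)).

Definition enorm (N : nat) (v : nat -> R) : R := sqrt (rsum N (fun i => v i * v i)).

Fixpoint p_iter (N : nat) (K : nat -> nat) (g : nat -> nat -> nat -> R) (mu : nat -> R)
  (p0 : nat -> R) (k : nat) : nat -> R :=
  match k with
  | O => p0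
  | S m => let y := y_vec N K g mu (p_iter N K g mu p0 m) in
           fun i => y i / enorm N y
  end.

Definition beta (N : nat) (K : nat -> nat) (g : nat -> nat -> nat -> R) (mu : nat -> R)
  (p0 : nat -> R) (k : nat) : R :=
  let p := p_iter N K g mu p0 k in
  let y := y_vec N K g mu p in
  fmin (N - 1) (fun i => p i / y i).

From Stdlib Require Import Reals Lra Lia ClassicalEpsilon.
From mathcomp Require all_boot all_order all_algebra Rstruct complex.
Open Scope R_scope.

(* Let [y(p)] be the componentwise maximum over the rows of [Z(mu)], so that
   [beta_k] is the largest [b] with [b y(p_k) <= p_k].  As [y] is monotone and
   positively homogeneous, [b y(p_k) <= p_k] survives the normalised step
   [p_(k+1) = y(p_k) / |y(p_k)|], so [beta] is nondecreasing.  Each [Z] in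
   [Z(mu)] satisfies [Z p <= y(p)], hence [beta_k Z p_k <= p_k] with [p_k > 0];
   comparing the moduli of the entries of any complex eigenvector with [p_k]
   bounds every eigenvalue modulus of [Z] by [1 / beta_k].  Irreducibility
   makes [Z] non-nilpotent, so it has a nonzero eigenvalue and
   [max lambda > 0] (essential, as [1 / 0 = 0] in Rocq); inverting the bound
   gives [beta_k <= 1 / max lambda], and a bounded nondecreasing sequence
   converges. *)

Lemma rsum_le n f h : (forall j, (j < n)%nat -> f j <= h j) -> rsum n f <= rsum n h.
Proof.
induction n as [|n IH]; intros H; simpl; [lra|].
assert (H1 := IH (fun j Hj => H j ltac:(lia))). assert (H2 := H n ltac:(lia)). lra.
Qed.

Lemma rsum_nonneg n f : (forall j, (j < n)%nat -> 0 <= f j) -> 0 <= rsum n f.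
Proof.
induction n as [|n IH]; intros H; simpl; [lra|].
assert (0 <= rsum n f) by (apply IH; intros; apply H; lia).
assert (0 <= f n) by (apply H; lia). lra.
Qed.

Lemma rsum_scal n c f : rsum n (fun j => c * f j) = c * rsum n f.
Proof. induction n as [|n IH]; simpl; [ring|]. rewrite IH. ring. Qed.

Lemma rsum_ge_term n f l : (forall j, (j < n)%nat -> 0 <= f j) -> (l < n)%nat -> f l <= rsum n f.
Proof.
induction n as [|n IH]; intros H Hl; [lia|]. simpl.
destruct (Nat.eq_dec l n) as [->|Hne].
- assert (0 <= rsum n f) by (apply rsum_nonneg; intros; apply H; lia). lra.
- assert (f l <= rsum n f) by (apply IH; [intros; apply H; lia | lia]).
  assert (0 <= f n) by (apply H; lia). lra.
Qed.

Lemma fmax_ge n f k : (k <= n)%nat -> f k <= fmax n f.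
Proof.
induction n as [|n IH]; intros Hk; simpl.
- replace k with 0%nat by lia. lra.
- destruct (Nat.eq_dec k (S n)) as [->|Hne]; [apply Rmax_r|].
  apply Rle_trans with (fmax n f); [apply IH; lia | apply Rmax_l].
Qed.

Lemma fmax_lub n f B : (forall k, (k <= n)%nat -> f k <= B) -> fmax n f <= B.
Proof.
induction n as [|n IH]; intros H; simpl; [apply H; lia|].
apply Rmax_lub; [apply IH; intros; apply H; lia | apply H; lia].
Qed.

Lemma fmax_attained n f : exists k, (k <= n)%nat /\ fmax n f = f k.
Proof.
induction n as [|n [k [Hk E]]]; simpl; [exists 0%nat; split; [lia|reflexivity]|].
unfold Rmax. destruct (Rle_dec (fmax n f) (f (S n))).
- exists (S n); split; [lia|reflexivity].
- exists k; split; [lia|exact E].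
Qed.

Lemma fmin_le n f k : (k <= n)%nat -> fmin n f <= f k.
Proof.
induction n as [|n IH]; intros Hk; simpl.
- replace k with 0%nat by lia. lra.
- destruct (Nat.eq_dec k (S n)) as [->|Hne]; [apply Rmin_r|].
  apply Rle_trans with (fmin n f); [apply Rmin_l | apply IH; lia].
Qed.

Lemma fmin_glb n f B : (forall k, (k <= n)%nat -> B <= f k) -> B <= fmin n f.
Proof.
induction n as [|n IH]; intros H; simpl; [apply H; lia|].
apply Rmin_glb; [apply IH; intros; apply H; lia | apply H; lia].
Qed.

Lemma fmin_pos n f : (forall k, (k <= n)%nat -> 0 < f k) -> 0 < fmin n f.
Proof.
induction n as [|n IH]; intros H; simpl; [apply H; lia|].
apply Rmin_glb_lt; [apply IH; intros; apply H; lia | apply H; lia].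
Qed.

Lemma Rle_div_of_mul_le a b c : 0 < c -> a * c <= b -> a <= b / c.
Proof.
intros Hc H. replace a with (a * c / c) by (field; lra).
apply Rmult_le_compat_r; [left; apply Rinv_0_lt_compat | ]; assumption.
Qed.

Lemma Rmul_le_of_le_div a b c : 0 < c -> a <= b / c -> a * c <= b.
Proof.
intros Hc H. replace b with (b / c * c) by (field; lra).
apply Rmult_le_compat_r; lra.
Qed.

Lemma fmin_ratio_mul_le n u v k : (k <= n)%nat -> 0 < v k ->
  fmin n (fun i => u i / v i) * v k <= u k.
Proof. intros Hk Hv. apply Rmul_le_of_le_div; [exact Hv | exact (fmin_le n _ k Hk)]. Qed.

Lemma le_fmin_ratio n u v b : (forall k, (k <= n)%nat -> 0 < v k) ->
  (forall k, (k <= n)%nat -> b * v k <= u k) -> b <= fmin n (fun i => u i / v i).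
Proof.
intros Hv H. apply fmin_glb. intros k Hk. apply Rle_div_of_mul_le; [apply Hv | apply H]; exact Hk.
Qed.

Lemma le_inv_of_le_inv a b : 0 < a -> 0 < b -> a <= 1 / b -> b <= 1 / a.
Proof.
intros Ha Hb H. apply Rle_div_of_mul_le; [exact Ha|].
rewrite Rmult_comm. replace 1 with (1 / b * b) by (field; lra).
apply Rmult_le_compat_r; lra.
Qed.

Lemma sqrt_sum_sq_triangle U W a b :
  sqrt ((U + a) * (U + a) + (W + b) * (W + b)) <= sqrt (U * U + W * W) + sqrt (a * a + b * b).
Proof.
assert (H1 : 0 <= U * U + W * W) by nra. assert (H2 : 0 <= a * a + b * b) by nra.
pose proof (sqrt_pos (U * U + W * W)) as P1. pose proof (sqrt_pos (a * a + b * b)) as P2.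
pose proof (sqrt_sqrt _ H1) as S1. pose proof (sqrt_sqrt _ H2) as S2.
set (s1 := sqrt (U * U + W * W)) in *. set (s2 := sqrt (a * a + b * b)) in *.
assert (Hcs : U * a + W * b <= s1 * s2).
{ assert (Hsq : (U * a + W * b) * (U * a + W * b) <= (s1 * s2) * (s1 * s2)).
  { replace ((s1 * s2) * (s1 * s2)) with ((s1 * s1) * (s2 * s2)) by ring. rewrite S1, S2.
    replace ((U * U + W * W) * (a * a + b * b))
      with ((U * a + W * b) * (U * a + W * b) + (U * b - W * a) * (U * b - W * a)) by ring.
    pose proof (Rle_0_sqr (U * b - W * a)) as Q. unfold Rsqr in Q. lra. }
  assert (0 <= s1 * s2) by nra. nra. }
rewrite <- (sqrt_square (s1 + s2)) by lra. apply sqrt_le_1_alt. nra.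
Qed.

Lemma rsum_sqrt_sum_sq_triangle n u w :
  sqrt (rsum n u * rsum n u + rsum n w * rsum n w) <= rsum n (fun j => sqrt (u j * u j + w j * w j)).
Proof.
induction n as [|n IH]; simpl.
- replace (0 * 0 + 0 * 0) with 0 by ring. rewrite sqrt_0. lra.
- eapply Rle_trans; [apply sqrt_sum_sq_triangle|]. lra.
Qed.

Lemma eigenvector_modulus_subinvariant N Z a c x y :
  (forall i j, (i < N)%nat -> (j < N)%nat -> 0 <= Z i j) ->
  (forall i, (i < N)%nat ->
     rsum N (fun j => Z i j * x j) = a * x i - c * y i /\
     rsum N (fun j => Z i j * y j) = c * x i + a * y i) ->
  forall i, (i < N)%nat ->
  sqrt (a * a + c * c) * sqrt (x i * x i + y i * y i)
    <= rsum N (fun j => Z i j * sqrt (x j * x j + y j * y j)).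
Proof.
intros HZ Heig i Hi. destruct (Heig i Hi) as [Ex Ey].
rewrite <- sqrt_mult by nra.
replace ((a * a + c * c) * (x i * x i + y i * y i))
  with (rsum N (fun j => Z i j * x j) * rsum N (fun j => Z i j * x j)
        + rsum N (fun j => Z i j * y j) * rsum N (fun j => Z i j * y j))
  by (rewrite Ex, Ey; ring).
eapply Rle_trans; [apply rsum_sqrt_sum_sq_triangle|].
apply rsum_le. intros j Hj. specialize (HZ i j Hi Hj).
replace (Z i j * x j * (Z i j * x j) + Z i j * y j * (Z i j * y j))
  with ((Z i j * Z i j) * (x j * x j + y j * y j)) by ring.
rewrite sqrt_mult, sqrt_square by nra. lra.
Qed.

(* Compare [r] with the multiple [t p] of [p] that touches it at some [i0]:
   [s r i0 <= (Z r) i0 <= t (Z p) i0 <= t p i0 / b = r i0 / b]. *)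
Lemma subinvariant_rate_le N Z r p s b :
  (forall i j, (i < N)%nat -> (j < N)%nat -> 0 <= Z i j) ->
  (forall j, 0 <= r j) -> (exists i, (i < N)%nat /\ 0 < r i) ->
  (forall j, (j < N)%nat -> 0 < p j) -> 0 < b ->
  (forall i, (i < N)%nat -> b * rsum N (fun j => Z i j * p j) <= p i) ->
  (forall i, (i < N)%nat -> s * r i <= rsum N (fun j => Z i j * r j)) ->
  s <= 1 / b.
Proof.
intros HZ Hr [i1 [Hi1 Hri1]] Hp Hb HZp Hs.
destruct (fmax_attained (N - 1) (fun j => r j / p j)) as [i0 [Hi0 Ht]].
set (t := fmax (N - 1) (fun j => r j / p j)) in *.
assert (Hi0N : (i0 < N)%nat) by lia.
assert (Hrt : forall j, (j < N)%nat -> r j <= t * p j).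
{ intros j Hj. specialize (Hp j Hj).
  replace (r j) with (r j / p j * p j) at 1 by (field; lra).
  apply Rmult_le_compat_r; [lra|]. apply (fmax_ge (N - 1) (fun j => r j / p j)). lia. }
assert (Ht_pos : 0 < t).
{ apply Rlt_le_trans with (r i1 / p i1).
  - apply Rdiv_lt_0_compat; [exact Hri1 | apply Hp; exact Hi1].
  - apply (fmax_ge (N - 1) (fun j => r j / p j)). lia. }
assert (Hri0 : r i0 = t * p i0) by (rewrite Ht; field; specialize (Hp i0 Hi0N); lra).
assert (Hri0_pos : 0 < r i0) by (rewrite Hri0; apply Rmult_lt_0_compat; auto).
assert (Hchain : b * (s * r i0) <= r i0).
{ apply Rle_trans with (b * (t * rsum N (fun j => Z i0 j * p j))).
  - apply Rmult_le_compat_l; [lra|]. eapply Rle_trans; [apply Hs; exact Hi0N|].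
    rewrite <- rsum_scal. apply rsum_le. intros j Hj.
    replace (t * (Z i0 j * p j)) with (Z i0 j * (t * p j)) by ring.
    apply Rmult_le_compat_l; [apply HZ | apply Hrt]; assumption.
  - rewrite Hri0. replace (b * (t * rsum N (fun j => Z i0 j * p j)))
      with (t * (b * rsum N (fun j => Z i0 j * p j))) by ring.
    apply Rmult_le_compat_l; [lra | apply HZp; exact Hi0N]. }
apply Rle_div_of_mul_le; [exact Hb|].
apply Rmult_le_reg_r with (r i0); [exact Hri0_pos | lra].
Qed.

Lemma eigenvalue_modulus_le N Z p b a c :
  (forall i j, (i < N)%nat -> (j < N)%nat -> 0 <= Z i j) ->
  (forall j, (j < N)%nat -> 0 < p j) -> 0 < b ->
  (forall i, (i < N)%nat -> b * rsum N (fun j => Z i j * p j) <= p i) ->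
  is_eigenvalue N Z a c -> sqrt (a * a + c * c) <= 1 / b.
Proof.
intros HZ Hp Hb HZp [x [y [[i1 [Hi1 Hnz]] Heig]]].
apply (subinvariant_rate_le N Z (fun j => sqrt (x j * x j + y j * y j)) p _ b);
  try assumption.
- intros j. apply sqrt_pos.
- exists i1. split; [exact Hi1|]. apply sqrt_lt_R0.
  destruct Hnz as [H|H]; pose proof (Rsqr_pos_lt _ H); unfold Rsqr in *; nra.
- apply eigenvector_modulus_subinvariant; assumption.
Qed.

Lemma is_lub_epsilon (S : R -> Prop) (B : R) :
  (forall t, S t -> t <= B) -> (exists t, S t) ->
  is_lub S (epsilon (inhabits 0) (fun r => is_lub S r)).
Proof.
intros HB Hne. apply epsilon_spec.
destruct (completeness S) as [m Hm]; [exists B; exact HB | exact Hne | exists m; exact Hm].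
Qed.

Lemma spectral_radius_pos_le N Z B :
  (forall a c, is_eigenvalue N Z a c -> sqrt (a * a + c * c) <= B) ->
  (exists a c, is_eigenvalue N Z a c /\ 0 < sqrt (a * a + c * c)) ->
  0 < spectral_radius N Z <= B.
Proof.
intros HB [a [c [He Hpos]]].
set (S := fun t => exists a c, is_eigenvalue N Z a c /\ t = sqrt (a * a + c * c)).
assert (HS : forall t, S t -> t <= B) by (intros t [a' [c' [He' ->]]]; apply HB; exact He').
assert (Hac : S (sqrt (a * a + c * c))) by (exists a, c; split; [exact He | reflexivity]).
destruct (is_lub_epsilon S B HS (ex_intro _ _ Hac)) as [Hub Hlub].
split.
- apply Rlt_le_trans with (sqrt (a * a + c * c)); [exact Hpos | apply Hub; exact Hac].
- apply Hlub. exact HS.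
Qed.

Lemma max_lambda_pos_le N K g mu B :
  (forall i, (i < N)%nat -> (1 <= K i)%nat) ->
  (forall c, admissible N K c -> 0 < spectral_radius N (Zmat g mu c) <= B) ->
  0 < max_lambda N K g mu <= B.
Proof.
intros HK HB.
set (T := fun t => exists c, admissible N K c /\ t = spectral_radius N (Zmat g mu c)).
assert (HT : forall t, T t -> t <= B) by (intros t [c [Hc ->]]; apply HB; exact Hc).
assert (Hc0 : admissible N K (fun _ => 0%nat)) by (intros i Hi; specialize (HK i Hi); lia).
assert (H0 : T (spectral_radius N (Zmat g mu (fun _ => 0%nat))))
  by (exists (fun _ => 0%nat); split; [exact Hc0 | reflexivity]).
destruct (is_lub_epsilon T B HT (ex_intro _ _ H0)) as [Hub Hlub].
split.
- apply Rlt_le_trans with (spectral_radius N (Zmat g mu (fun _ => 0%nat)));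
    [apply HB; exact Hc0 | apply Hub; exact H0].
- apply Hlub. exact HT.
Qed.

Module NonzeroEigenvalue.
Import all_boot all_order all_algebra Rstruct complex.
Import Order.TTheory GRing.Theory Num.Theory.
Local Open Scope ring_scope.
Local Set Implicit Arguments.
Local Unset Strict Implicit.

Section NonnegativeMatrixPowers.
Context {n : nat} {M : 'M[R]_n}.
Hypothesis M_ge0 : forall i j, 0 <= M i j.

Lemma mxpow_ge0 m i j : 0 <= (M ^+ m) i j.
Proof.
elim: m i j => [|m IH] i j; first by rewrite expr0 mxE ler0n.
rewrite exprS -mulmxE mxE; apply: sumr_ge0 => k _; exact: mulr_ge0.
Qed.

Lemma mxpow_mul_entry_le m1 m2 i l j : (M ^+ m1) i l * (M ^+ m2) l j <= (M ^+ (m1 + m2)) i j.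
Proof.
rewrite exprD -mulmxE mxE (bigD1 l) //= lerDl.
by apply: sumr_ge0 => k _; apply: mulr_ge0; apply: mxpow_ge0.
Qed.

Lemma diag_pos_mxpow_neq0 m i : 0 < (M ^+ m.+1) i i -> M ^+ n != 0.
Proof.
move=> Hm; have Hk k : 0 < (M ^+ (m.+1 * k.+1)) i i.
  elim: k => [|k IH]; first by rewrite muln1.
  rewrite mulnSr; apply: lt_le_trans (mxpow_mul_entry_le _ _ i i i); exact: mulr_gt0.
have n_gt0 : (0 < n)%N by apply: leq_ltn_trans (ltn_ord i).
apply/eqP => Mn0; move: (Hk n.-1).
by rewrite prednK // mulnC exprM Mn0 expr0n mxE ltxx.
Qed.
End NonnegativeMatrixPowers.

(* Transposed, because eigenvectors in mxalgebra are row vectors. *)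
Definition tr_mx_of (n : nat) (Z : nat -> nat -> R) : 'M[R]_n := \matrix_(a, b) Z b a.

Section Irreducible.
Context {n : nat} {Z : nat -> nat -> R}.
Hypothesis Z_ge0 : forall i j, (i < n)%N -> (j < n)%N -> 0 <= Z i j.

Lemma tr_mx_of_ge0 i j : 0 <= tr_mx_of n Z i j.
Proof. by rewrite mxE; apply: Z_ge0. Qed.

Lemma reach_mxpow_pos a b : reach n Z a b -> forall (Ha : (a < n)%N) (Hb : (b < n)%N),
  exists m, 0 < (tr_mx_of n Z ^+ m.+1) (Ordinal Hb) (Ordinal Ha).
Proof.
elim=> {a b} [a b Hab|a l b /ssrnat.ltP Hl Hal _ IH] Ha Hb.
  by exists 0%N; rewrite expr1 mxE; apply/RltP.
have [m Hm] := IH Hl Hb; exists m.+1; rewrite -addn1.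
apply: lt_le_trans (mxpow_mul_entry_le tr_mx_of_ge0 m.+1 1 _ (Ordinal Hl) _).
by rewrite expr1; apply: mulr_gt0 Hm _; rewrite mxE; apply/RltP.
Qed.

Lemma irreducible_mxpow_neq0 : (0 < n)%N -> irreducible n Z -> tr_mx_of n Z ^+ n != 0.
Proof.
move=> n_gt0 Hirr.
have /reach_mxpow_pos/(_ n_gt0 n_gt0) [m Hm] := Hirr 0%N 0%N (ssrnat.ltP n_gt0) (ssrnat.ltP n_gt0).
exact: (diag_pos_mxpow_neq0 tr_mx_of_ge0 Hm).
Qed.
End Irreducible.

Lemma nonzero_eigenvalue_of_mxpow_neq0 (F : closedFieldType) n (A : 'M[F]_n.+1) :
  A ^+ n.+1 != 0 -> exists2 z, z != 0 & eigenvalue A z.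
Proof.
move=> An0; have [rs char_rs] := closed_field_poly_normal (char_poly A).
rewrite (monicP (char_poly_monic A)) scale1r in char_rs.
have [/hasP [z rs_z z_neq0]|/hasPn rs0] := boolP (has (fun z => z != 0) rs).
  by exists z; rewrite // eigenvalue_root_char char_rs root_prod_XsubC.
have char_X : char_poly A = 'X^(n.+1).
  have size_rs : size rs = n.+1.
    by apply: succn_inj; rewrite -(size_prod_XsubC rs id) -char_rs size_char_poly.
  rewrite char_rs -size_rs (eq_big_seq (fun=> 'X)) ?big_const_seq ?count_predT ?iter_mulr_1 //.
  by move=> z /rs0 /negPn /eqP ->; rewrite subr0.
have := Cayley_Hamilton A; rewrite char_X rmorphXn /= horner_mx_X => /eqP.
by rewrite (negPf An0).
Qed.

Lemma rsum_big m f : rsum m f = \sum_(k < m) f k.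
Proof. by elim: m => [|m IH] /=; rewrite ?big_ord0 // big_ord_recr /= IH. Qed.

Lemma Re_sum m (F : 'I_m -> R[i]) : complex.Re (\sum_(k < m) F k) = \sum_(k < m) complex.Re (F k).
Proof. by apply: big_morph => // -[? ?] [? ?]. Qed.

Lemma Im_sum m (F : 'I_m -> R[i]) : complex.Im (\sum_(k < m) F k) = \sum_(k < m) complex.Im (F k).
Proof. by apply: big_morph => // -[? ?] [? ?]. Qed.

Lemma is_eigenvalue_of_complex n Z (z : R[i]) (v : 'rV[R[i]]_n.+1) :
  v != 0 -> v *m map_mx (real_complex R) (tr_mx_of n.+1 Z) = z *: v ->
  is_eigenvalue n.+1 Z (complex.Re z) (complex.Im z).
Proof.
move=> v_neq0 Hv.
exists (fun j => complex.Re (v 0 (inord j))), (fun j => complex.Im (v 0 (inord j))); split.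
  have [k vk_neq0] : exists k, v 0 k != 0.
    apply/existsP; apply: contraR v_neq0 => /existsPn v0.
    by apply/eqP/matrixP => i k; rewrite ord1 mxE; apply/eqP/negPn/v0.
  exists (val k); split; first exact/ssrnat.ltP/ltn_ord.
  rewrite inord_val; move: vk_neq0; case: (v 0 k) => a b vk_neq0 /=.
  have [a0|/eqP] := eqVneq a 0; last by left.
  by right => b0; rewrite a0 b0 eqxx in vk_neq0.
move=> i /ssrnat.ltP Hi.
have := congr1 (fun w : 'rV_n.+1 => w 0 (inord i)) Hv; rewrite !mxE.
under eq_bigr => k _ do rewrite !mxE inordK //.
move=> Ei; rewrite !rsum_big; split.
- transitivity (complex.Re (z * v 0 (inord i))); last by move: (z) (v 0 (inord i)) => [? ?] [? ?].
  rewrite -Ei Re_sum; apply: eq_bigr => k _.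
  by rewrite inord_val; case: (v 0 k) => a b /=; rewrite mulr0 subr0 mulrC.
- transitivity (complex.Im (z * v 0 (inord i))).
    rewrite -Ei Im_sum; apply: eq_bigr => k _.
    by rewrite inord_val; case: (v 0 k) => a b /=; rewrite mulr0 add0r mulrC.
  by move: (z) (v 0 (inord i)) => [a b] [c d] /=; rewrite addrC.
Qed.

Lemma irreducible_nonzero_complex_eigenvalue n Z :
  (forall i j, (i < n.+1)%N -> (j < n.+1)%N -> 0 <= Z i j) -> irreducible n.+1 Z ->
  exists2 z : R[i], z != 0 & is_eigenvalue n.+1 Z (complex.Re z) (complex.Im z).
Proof.
move=> Z_ge0 Hirr.
have Cpow_neq0 : map_mx (real_complex R) (tr_mx_of n.+1 Z) ^+ n.+1 != 0.
  by rewrite -rmorphXn /= map_mx_eq0 (irreducible_mxpow_neq0 Z_ge0).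
have [z z_neq0 /eigenvalueP [v Hv v_neq0]] := nonzero_eigenvalue_of_mxpow_neq0 Cpow_neq0.
by exists z; last exact: is_eigenvalue_of_complex Hv.
Qed.

Local Close Scope ring_scope.

Lemma irreducible_has_nonzero_eigenvalue N Z :
  (1 <= N)%coq_nat -> (forall i j, (i < N)%coq_nat -> (j < N)%coq_nat -> 0 <= Z i j) ->
  irreducible N Z -> exists a c, is_eigenvalue N Z a c /\ 0 < sqrt (a * a + c * c).
Proof.
case: N => [/PeanoNat.Nat.nle_succ_0 []|n] _ Z_ge0 Hirr.
have Z_ge0' i j : (i < n.+1)%N -> (j < n.+1)%N -> (0 <= Z i j)%R.
  by move=> /ssrnat.ltP Hi /ssrnat.ltP Hj; apply/RleP; exact: Z_ge0.
have [[a c] /= ac_neq0 Heig] := irreducible_nonzero_complex_eigenvalue Z_ge0' Hirr.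
exists a, c; split; first exact: Heig.
apply: sqrt_lt_R0; have := Rle_0_sqr a; have := Rle_0_sqr c; rewrite /Rsqr.
have [a0 | /Rsqr_pos_lt] := Req_dec a 0; last by rewrite /Rsqr; lra.
have [c0 | /Rsqr_pos_lt] := Req_dec c 0; last by rewrite /Rsqr; lra.
by case/eqP: ac_neq0; rewrite a0 c0.
Qed.

End NonzeroEigenvalue.

Definition zrow (g : nat -> nat -> nat -> R) (mu : nat -> R) (i k j : nat) : R :=
  (if Nat.eqb i j then 1 else 0) - a_row g mu i k j.

Section Iteration.
Variables (N : nat) (K : nat -> nat) (g : nat -> nat -> nat -> R) (mu : nat -> R).
Hypotheses (HN : (1 <= N)%nat)
  (HK : forall i, (i < N)%nat -> (1 <= K i)%nat)
  (Hg : forall i k j, (i < N)%nat -> (k < K i)%nat -> (j < N)%nat -> 0 <= g i k j)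
  (Hgii : forall i k, (i < N)%nat -> (k < K i)%nat -> 0 < g i k i)
  (Hmu : forall i, (i < N)%nat -> 0 < mu i)
  (Hirr : forall c, admissible N K c -> irreducible N (Zmat g mu c)).

Lemma y_vec_fmax p i :
  y_vec N K g mu p i = fmax (K i - 1) (fun k => rsum N (fun j => zrow g mu i k j * p j)).
Proof. reflexivity. Qed.

Lemma zrow_nonneg i k j : (i < N)%nat -> (k < K i)%nat -> (j < N)%nat -> 0 <= zrow g mu i k j.
Proof.
intros Hi Hk Hj. pose proof (Hgii i k Hi Hk).
unfold zrow, a_row. rewrite Nat.eqb_sym. destruct (Nat.eqb j i); [lra|].
replace (0 - - mu i * g i k j / g i k i) with (mu i * g i k j / g i k i) by (field; lra).
apply Rle_mult_inv_pos; [apply Rmult_le_pos; [left; apply Hmu | apply Hg] | ]; assumption.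
Qed.

(* Irreducibility of a matrix of [Z(mu)] whose [i]-th row is [e_i - a_i^k]
   forces an edge out of [i] in that row. *)
Lemma zrow_mul_pos p i k : (i < N)%nat -> (k < K i)%nat ->
  (forall j, (j < N)%nat -> 0 < p j) -> 0 < rsum N (fun j => zrow g mu i k j * p j).
Proof.
intros Hi Hk Hp.
set (c := fun x => if Nat.eqb x i then k else 0%nat).
assert (Hc : admissible N K c).
{ intros x Hx. unfold c. destruct (Nat.eqb_spec x i) as [->|]; [exact Hk | pose proof (HK x Hx); lia]. }
assert (Hci : c i = k) by (unfold c; rewrite Nat.eqb_refl; reflexivity).
assert (Hedge : exists l, (l < N)%nat /\ zrow g mu i k l > 0).
{ rewrite <- Hci. pose proof (Hirr c Hc i i Hi Hi) as Hreach.
  inversion Hreach as [? ? Hii | ? l ? Hl Hil _];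
    [exists i | exists l]; split; assumption. }
destruct Hedge as [l [Hl Hil]].
apply Rlt_le_trans with (zrow g mu i k l * p l).
- apply Rmult_lt_0_compat; [exact Hil | apply Hp; exact Hl].
- apply (rsum_ge_term N (fun j => zrow g mu i k j * p j)); [|exact Hl].
  intros j Hj. apply Rmult_le_pos; [apply zrow_nonneg | left; apply Hp]; assumption.
Qed.

Lemma y_vec_ge_row p i k : (k < K i)%nat ->
  rsum N (fun j => zrow g mu i k j * p j) <= y_vec N K g mu p i.
Proof.
intros Hk. rewrite y_vec_fmax.
apply (fmax_ge _ (fun k => rsum N (fun j => zrow g mu i k j * p j))). lia.
Qed.

Lemma y_vec_pos p i : (i < N)%nat -> (forall j, (j < N)%nat -> 0 < p j) -> 0 < y_vec N K g mu p i.
Proof.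
intros Hi Hp. pose proof (HK i Hi).
apply Rlt_le_trans with (rsum N (fun j => zrow g mu i 0 j * p j)).
- apply zrow_mul_pos; [exact Hi | lia | exact Hp].
- apply y_vec_ge_row. lia.
Qed.

Lemma y_vec_le_scaled p q c i : (i < N)%nat -> 0 <= c ->
  (forall j, (j < N)%nat -> p j <= c * q j) -> y_vec N K g mu p i <= c * y_vec N K g mu q i.
Proof.
intros Hi Hc Hpq. rewrite y_vec_fmax. apply fmax_lub. intros k Hk.
assert (HkK : (k < K i)%nat) by (pose proof (HK i Hi); lia).
apply Rle_trans with (c * rsum N (fun j => zrow g mu i k j * q j)).
- rewrite <- rsum_scal. apply rsum_le. intros j Hj.
  replace (c * (zrow g mu i k j * q j)) with (zrow g mu i k j * (c * q j)) by ring.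
  apply Rmult_le_compat_l; [apply zrow_nonneg | apply Hpq]; assumption.
- apply Rmult_le_compat_l; [exact Hc | apply y_vec_ge_row; exact HkK].
Qed.

Lemma enorm_pos v : (forall i, (i < N)%nat -> 0 < v i) -> 0 < enorm N v.
Proof.
intros Hv. unfold enorm. apply sqrt_lt_R0.
apply Rlt_le_trans with (v 0%nat * v 0%nat).
- specialize (Hv 0%nat ltac:(lia)). nra.
- apply (rsum_ge_term N (fun i => v i * v i)); [|lia].
  intros j Hj. specialize (Hv j Hj). nra.
Qed.

Variable p0 : nat -> R.
Hypothesis Hp0 : forall i, (i < N)%nat -> 0 < p0 i.

Notation p k := (p_iter N K g mu p0 k).
Notation y k := (y_vec N K g mu (p_iter N K g mu p0 k)).

Lemma p_iter_pos k i : (i < N)%nat -> 0 < p k i.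
Proof.
revert i. induction k as [|k IH]; intros i Hi; [apply Hp0; exact Hi|].
apply Rdiv_lt_0_compat; [apply y_vec_pos | apply enorm_pos; intros; apply y_vec_pos]; assumption.
Qed.

Lemma beta_pos k : 0 < beta N K g mu p0 k.
Proof.
apply fmin_pos. intros i Hi.
apply Rdiv_lt_0_compat; [|apply y_vec_pos; [|intros; apply p_iter_pos]]; try apply p_iter_pos; lia.
Qed.

Lemma beta_mul_y_le k i : (i < N)%nat -> beta N K g mu p0 k * y k i <= p k i.
Proof.
intros Hi. apply fmin_ratio_mul_le; [lia|]. apply y_vec_pos; [exact Hi | apply p_iter_pos].
Qed.

Lemma beta_le_succ k : beta N K g mu p0 k <= beta N K g mu p0 (S k).
Proof.
set (b := beta N K g mu p0 k). set (n := enorm N (y k)).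
assert (Hb : 0 < b) by apply beta_pos.
assert (Hn : 0 < n) by (apply enorm_pos; intros; apply y_vec_pos; [|apply p_iter_pos]; assumption).
apply le_fmin_ratio.
- intros i Hi. apply y_vec_pos; [|apply p_iter_pos]; lia.
- intros i Hi.
  assert (Hy : y (S k) i <= / (n * b) * y k i).
  { apply y_vec_le_scaled; [lia | left; apply Rinv_0_lt_compat; nra|].
    intros j Hj. change (p (S k) j) with (y k j / n).
    pose proof (beta_mul_y_le k j Hj) as Hbj. fold b in Hbj.
    replace (/ (n * b) * p k j) with (p k j / b / n) by (field; lra).
    unfold Rdiv. apply Rmult_le_compat_r; [left; apply Rinv_0_lt_compat; exact Hn|].
    apply Rle_div_of_mul_le; [exact Hb | lra]. }
  change (p (S k) i) with (y k i / n).
  apply Rle_trans with (b * (/ (n * b) * y k i)); [apply Rmult_le_compat_l; lra|].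
  right. field. lra.
Qed.

Lemma beta_mul_Zmat_le k c i : admissible N K c -> (i < N)%nat ->
  beta N K g mu p0 k * rsum N (fun j => Zmat g mu c i j * p k j) <= p k i.
Proof.
intros Hc Hi. eapply Rle_trans; [|apply beta_mul_y_le; exact Hi].
apply Rmult_le_compat_l; [left; apply beta_pos|].
apply (y_vec_ge_row (p k) i (c i)). apply Hc. exact Hi.
Qed.

Lemma max_lambda_le_inv_beta k : 0 < max_lambda N K g mu <= 1 / beta N K g mu p0 k.
Proof.
apply max_lambda_pos_le; [exact HK|]. intros c Hc.
assert (HZ : forall i j, (i < N)%nat -> (j < N)%nat -> 0 <= Zmat g mu c i j)
  by (intros i j Hi Hj; apply zrow_nonneg; [|apply Hc|]; assumption).
apply spectral_radius_pos_le.
- intros a b. apply (eigenvalue_modulus_le N _ (p k)); [exact HZ | apply p_iter_pos | apply beta_pos |].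
  intros i Hi. apply beta_mul_Zmat_le; assumption.
- apply NonzeroEigenvalue.irreducible_has_nonzero_eigenvalue; [exact HN | exact HZ | apply Hirr; exact Hc].
Qed.

Lemma beta_le_inv_max_lambda k : beta N K g mu p0 k <= 1 / max_lambda N K g mu.
Proof.
destruct (max_lambda_le_inv_beta k) as [Hpos Hle].
apply le_inv_of_le_inv; [exact Hpos | apply beta_pos | exact Hle].
Qed.

End Iteration.

Theorem lemma3 (N : nat) (K : nat -> nat) (g : nat -> nat -> nat -> R)
  (mu : nat -> R) (p0 : nat -> R)
  (HN : (2 <= N)%nat)
  (HK : forall i, (i < N)%nat -> (1 <= K i)%nat)
  (Hg : forall i k j, (i < N)%nat -> (k < K i)%nat -> (j < N)%nat -> 0 <= g i k j)
  (Hgii : forall i k, (i < N)%nat -> (k < K i)%nat -> 0 < g i k i)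
  (Hmu : forall i, (i < N)%nat -> 0 < mu i)
  (Hirr : forall c, admissible N K c -> irreducible N (Zmat g mu c))
  (Hp0 : forall i, (i < N)%nat -> 0 < p0 i) :
  (forall k, beta N K g mu p0 k <= beta N K g mu p0 (S k)) /\
  (forall k, beta N K g mu p0 k <= 1 / max_lambda N K g mu) /\
  (exists l, Un_cv (beta N K g mu p0) l).
Proof.
assert (HN1 : (1 <= N)%nat) by lia.
assert (Hmono : forall k, beta N K g mu p0 k <= beta N K g mu p0 (S k))
  by (intros; apply beta_le_succ; assumption).
assert (Hbound : forall k, beta N K g mu p0 k <= 1 / max_lambda N K g mu)
  by (intros; apply beta_le_inv_max_lambda; assumption).
split; [exact Hmono | split; [exact Hbound|]].
destruct (growing_cv (beta N K g mu p0) Hmono) as [l Hl].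
- exists (1 / max_lambda N K g mu). intros x [k ->]. apply Hbound.
- exists l. exact Hl.
Qed.
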